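(* Let $\mathbf{G}=(\mathcal{V},\mathcal{E})$ be a directed graph on $\mathcal{V}=\{1,\dots,m\}$, let $a>0$, and let $\{r_{ij}\}_{(i,j)\in\mathcal{E}}$ be independent random variables, each uniform on $[0,ma)$. Define $t_i=\mathrm{mod}\big(\sum_{j:(j,i)\in\mathcal{E}} r_{ji}-\sum_{j:(i,j)\in\mathcal{E}} r_{ij},\,ma\big)$ for $i\in\mathcal{V}$. If the undirected graph $\bar{\mathbf{G}}$ is connected, then the vector $\mathbf{t}=(t_1,\dots,t_m)$ is uniformly distributed over the set of points of $[0,ma)^m$ satisfying $\mathrm{mod}\big(\sum_{i=1}^m t_i, ma\big)=0$.
   Context: $\bar{\mathbf{G}}$ is the undirected graph on $\mathcal{V}$ obtained from $\mathbf{G}$ by ignoring edge orientations. For $a'>0$ and real $y$, $\mathrm{mod}(y,a')=y-pa'$ where $p$ is the unique integer with $y-pa'\in[0,a')$; equivalently $\mathbf{t}=\mathrm{mod}(B\mathbf{r},ma)$ entrywise, with $B$ the incidence matrix of $\mathbf{G}$ and $\mathbf{r}$ the vector of the $r_{ij}$. *)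

From HB Require Import structures.
From mathcomp Require Import all_boot all_order all_algebra.
From mathcomp Require Import all_classical all_reals all_analysis.
Set Implicit Arguments. Unset Strict Implicit. Unset Printing Implicit Defensive.
Import Order.TTheory GRing.Theory Num.Theory.
Local Open Scope classical_set_scope.
Local Open Scope ring_scope.

Definition modr (R : realType) (y a' : R) : R :=
  y - (Num.floor (y / a'))%:~R * a'.

Definition ubar (m : nat) (E : {set 'I_m * 'I_m}) : rel 'I_m :=
  fun i j => ((i, j) \in E) || ((j, i) \in E).

Definition uconnected (m : nat) (E : {set 'I_m * 'I_m}) : Prop :=
  forall i j : 'I_m, connect (ubar E) i j.

Definition mutually_independent (R : realType) (d : measure_display)
  (T : measurableType d) (P : probability T R) (I : finType)
  (J : {set I}) (X : I -> T -> R) : Prop :=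
  (forall i, i \in J -> measurable_fun setT (X i)) /\
  forall (K : {set I}) (B : I -> set R), K \subset J ->
    (forall i, i \in K -> measurable (B i)) ->
    P [set w | forall i, i \in K -> B i (X i w)] =
    (\prod_(i in K) P (X i @^-1` B i))%E.

Definition uniform_on (R : realType) (d : measure_display)
  (T : measurableType d) (P : probability T R) (X : T -> R) (lo hi : R) : Prop :=
  measurable_fun setT X /\
  forall A : set R, measurable A ->
    P (X @^-1` A) = (lebesgue_measure (A `&` `[lo, hi[) * ((hi - lo)^-1)%:E)%E.

Definition tvec (R : realType) (d : measure_display) (T : measurableType d)
  (m : nat) (E : {set 'I_m * 'I_m}) (a : R) (r : 'I_m * 'I_m -> T -> R)
  (i : 'I_m) : T -> R :=
  fun w => modr (\sum_(e in E | e.2 == i) r e w - \sum_(e in E | e.1 == i) r e w)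
                (m%:R * a).

(* Let f_i be the net flow of the r_e into vertex i, so that t_i = mod(f_i, ma). The flows sum
   to zero, hence mod(sum_i t_i, ma) = 0. For the distribution fix i0 and a set K of vertices
   avoiding i0. Since the undirected graph is connected, some edge e joins a vertex l in K to a
   vertex p outside K. Removing e changes none of the t_i with i in K \ {l}, while
   t_l = mod(Y +- r_e, ma) with Y built from the other edges; thus r_e is independent of Y and of
   these t_i. A uniform variable on [0, ma) translated modulo ma stays uniform, so
   P(t_i in B_i for i in K) = U(B_l) P(t_i in B_i for i in K \ {l}), U the uniform law, and
   induction on |K| shows that the t_i, i <> i0, are independent and uniform. *)

From HB Require Import structures.
From mathcomp Require Import all_boot all_order all_algebra.
From mathcomp Require Import all_classical all_reals all_analysis.
From mathcomp Require Import measurable_realfun.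
From mathcomp Require Import ring lra.
Set Implicit Arguments. Unset Strict Implicit. Unset Printing Implicit Defensive.
Import Order.TTheory GRing.Theory Num.Theory.
Local Open Scope classical_set_scope.
Local Open Scope ring_scope.
Section modr_theory.
Variables (R : realType) (c : R).

Lemma modr0 : modr 0 c = 0.
Proof. by rewrite /modr mul0r floor0 mul0r subr0. Qed.

Lemma modrDintmul (y : R) (n : int) : modr (y + n%:~R * c) c = modr y c.
Proof.
rewrite /modr; have [->|c0] := eqVneq c 0; first by rewrite !mulr0 addr0.
rewrite mulrDl mulfK // floorDrz ?intr_int // intrKfloor intrD mulrDl.
by rewrite opprD addrACA subrr addr0.
Qed.

Lemma modr_sum_modr (I : finType) (y : I -> R) :
  modr (\sum_i modr (y i) c) c = modr (\sum_i y i) c.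
Proof.
have -> : \sum_i modr (y i) c = \sum_i y i + (- \sum_i Num.floor (y i / c))%:~R * c.
  by rewrite /modr sumrB intrN mulNr -mulr_suml -rmorph_sum.
exact: modrDintmul.
Qed.

Hypothesis c_gt0 : 0 < c.

Lemma modr_shift (y : R) (n : int) : n%:~R * c <= y < n%:~R * c + c ->
  modr y c = y - n%:~R * c.
Proof.
move=> yn; rewrite /modr; congr (_ - _%:~R * _); apply: floor_def.
by rewrite intrD ler_pdivlMr // ltr_pdivrMr // mulrDl mul1r.
Qed.

Lemma measurable_modr : measurable_fun setT (fun v : R => modr v c).
Proof.
apply: measurable_funB => //; apply: measurable_funM; last exact: measurable_cst.
apply: nondecreasing_measurable => // u v uv.
by rewrite ler_int le_floor // ler_pM2r ?invr_gt0.
Qed.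

Lemma measurable_modr_preimage (A : set R) : measurable A ->
  measurable [set v | A (modr v c)].
Proof. by move=> mA; rewrite -[X in measurable X]setTI; exact: measurable_modr. Qed.

End modr_theory.

Section lebesgue_translation.
Variable R : realType.
Local Notation mu := (@lebesgue_measure R).

Lemma measurable_addr_preimage (t : R) (A : set R) : measurable A ->
  measurable ((fun x => x + t) @^-1` A).
Proof.
move=> mA; rewrite -[X in measurable X]setTI.
by apply: measurable_funD => //; exact: measurable_cst.
Qed.

Lemma lebesgue_measure_addr_preimage (t : R) (A : set R) : measurable A ->
  mu ((fun x => x + t) @^-1` A) = mu A.
Proof.
move=> mA; have mf : measurable_fun setT (fun x : R => x + t).
  by apply: measurable_funD => //; exact: measurable_cst.
pose nu := @measure_function_pushforward__canonical__measure_function_Measure _ _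
  (measurableTypeR R) (measurableTypeR R) R mu _ mf.
rewrite (@lebesgue_measure_unique R nu _ A mA) // => _ [[x y] _ <-] /=.
rewrite /nu /= /pushforward.
have -> : (fun z => z + t) @^-1` `]x, y] = `]x - t, y - t]%classic.
  by apply/seteqP; split=> z /=; rewrite !in_itv /= ltrBlDr lerBrDr.
rewrite !lebesgue_measure_itv /= !lte_fin ltrD2r.
by case: ifP => // _; congr (_%:E); ring.
Qed.

Lemma lebesgue_measure_subl_preimage (y : R) (A : set R) : measurable A ->
  mu ((fun x => y - x) @^-1` A) = mu A.
Proof.
move=> mA; have mAy := measurable_addr_preimage y mA.
have -> : (fun x => y - x) @^-1` A =
    (-%R : R -> measurableTypeR R) @^-1` ((fun x => x + y) @^-1` A).
  by apply/seteqP; split => x /=; rewrite addrC.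
by have := lebesgue_measureN mAy; rewrite /pushforward => ->;
  exact: lebesgue_measure_addr_preimage.
Qed.

Lemma lebesgue_measure_subset_setU1 (A B : set R) (x : R) :
  measurable A -> measurable B -> A `<=` B -> B `<=` A `|` [set x] -> mu B = mu A.
Proof.
move=> mA mB AB BAx; apply/le_anti/andP; split; last by apply: le_measure; rewrite ?inE.
apply: (@le_trans _ _ (mu (A `|` [set x]))).
  by apply: le_measure; rewrite ?inE //; exact: measurableU.
by rewrite measureU0 //; exact: lebesgue_measure_set1.
Qed.

Lemma lebesgue_measure_setI_itv_oc_co (S : set R) (a b : R) : measurable S ->
  mu (S `&` `]a, b]) = mu (S `&` `[a, b[).
Proof.
move=> mS; have mSI (i : interval R) : measurable (S `&` [set` i]).
  by apply: measurableI => //; exact: measurable_itv.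
rewrite (@lebesgue_measure_subset_setU1 (S `&` `]a, b[) _ b) //; last 2 first.
- by move=> x [Sx]; rewrite /= !in_itv /= => /andP[ax xb]; rewrite ax ltW.
- move=> x [Sx]; rewrite /= !in_itv /= => /andP[ax xb].
  by have [->|xb'] := eqVneq x b; [right | left; rewrite ax lt_neqAle xb' xb].
rewrite (@lebesgue_measure_subset_setU1 (S `&` `]a, b[) _ a) //.
- by move=> x [Sx]; rewrite /= !in_itv /= => /andP[ax xb]; rewrite xb ltW.
- move=> x [Sx]; rewrite /= !in_itv /= => /andP[ax xb].
  by have [->|xa'] := eqVneq x a; [right | left; rewrite xb andbT lt_neqAle eq_sym xa' ax].
Qed.

Lemma lebesgue_measure_setI_itv_co_split (A : set R) (a b e : R) :
  measurable A -> a <= b <= e ->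
  mu (A `&` `[a, e[) = (mu (A `&` `[a, b[) + mu (A `&` `[b, e[))%E.
Proof.
move=> mA /andP[ab be]; rewrite (@itv_bndbnd_setU _ _ _ (BLeft b)) ?bnd_simp //.
rewrite setIUr measureU //; try by apply: measurableI => //; exact: measurable_itv.
by apply/seteqP; split => v //= [] [_]; rewrite !in_itv /= => /andP[? ?] [_] /andP[? ?]; lra.
Qed.

Lemma lebesgue_measure_modr_window (c x : R) (A : set R) : 0 < c -> measurable A ->
  mu ([set v | A (modr v c)] `&` `[x, x + c[) = mu (A `&` `[0, c[).
Proof.
move=> c0 mA; set k := Num.floor (x / c); set K := k%:~R * c.
have [Kx xK] : K <= x /\ x < K + c.
  have /andP[] := floor_itv (x / c).
  by rewrite -/k intrD ler_pdivlMr // ltr_pdivrMr // mulrDl mul1r.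
(* On [x, x + c[, mod(., c) is a translation on either side of K + c. *)
have modr_lo v : K <= v < K + c -> modr v c = v - K.
  exact: modr_shift.
have modr_hi v : K + c <= v < K + c + c -> modr v c = v - (K + c).
  have -> : K + c = (k + 1)%:~R * c by rewrite intrD mulrDl mul1r.
  exact: modr_shift.
have mAI (i : interval R) : measurable (A `&` [set` i]).
  by apply: measurableI => //; exact: measurable_itv.
have -> : [set v | A (modr v c)] `&` `[x, x + c[ =
    (fun v => v + - (K + c)) @^-1` (A `&` `[0, x - K[) `|`
    (fun v => v + - K) @^-1` (A `&` `[x - K, c[).
  apply/seteqP; split => v /=; rewrite !in_itv /=.
    move=> [Av /andP[xv vxc]]; have [vK|Kv] := ltrP v (K + c).
      rewrite modr_lo in Av; last by apply/andP; split; lra.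
      by right; split => //; apply/andP; split; lra.
    rewrite modr_hi in Av; last by apply/andP; split; lra.
    by left; split => //; apply/andP; split; lra.
  case=> -[Av /andP[v1 v2]].
    rewrite -modr_hi in Av; last by apply/andP; split; lra.
    by split => //; apply/andP; split; lra.
  rewrite -modr_lo in Av; last by apply/andP; split; lra.
  by split => //; apply/andP; split; lra.
rewrite (@lebesgue_measure_setI_itv_co_split _ 0 (x - K)) //; last by apply/andP; split; lra.
rewrite -(lebesgue_measure_addr_preimage (- (K + c)) (mAI `[0, x - K[)).
rewrite -(lebesgue_measure_addr_preimage (- K) (mAI `[x - K, c[)).
apply: measureU; try exact: measurable_addr_preimage.
by apply/seteqP; split => v //= [] [_]; rewrite !in_itv /= => /andP[? ?] [_] /andP[? ?]; lra.
Qed.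

Lemma lebesgue_measure_modr_addl (c y : R) (A : set R) : 0 < c -> measurable A ->
  mu ([set u | A (modr (y + u) c)] `&` `[0, c[) = mu (A `&` `[0, c[).
Proof.
move=> c0 mA; rewrite -(lebesgue_measure_modr_window y c0 mA).
rewrite -[RHS](lebesgue_measure_addr_preimage y); last first.
  by apply: measurableI; [exact: measurable_modr_preimage | exact: measurable_itv].
congr mu; apply/seteqP; split => u /=; rewrite !in_itv /= addrC => -[Au /andP[? ?]];
  by split => //; apply/andP; split; lra.
Qed.

Lemma lebesgue_measure_modr_subl (c y : R) (A : set R) : 0 < c -> measurable A ->
  mu ([set u | A (modr (y - u) c)] `&` `[0, c[) = mu (A `&` `[0, c[).
Proof.
move=> c0 mA; have mS := measurable_modr_preimage c0 mA.
rewrite -(lebesgue_measure_modr_window (y - c) c0 mA) subrK.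
rewrite -[RHS]lebesgue_measure_setI_itv_oc_co //.
rewrite -[RHS](lebesgue_measure_subl_preimage y); last first.
  by apply: measurableI => //; exact: measurable_itv.
congr mu; apply/seteqP; split => u /=; rewrite !in_itv /= => -[Au /andP[? ?]];
  by split => //; apply/andP; split; lra.
Qed.

Lemma lebesgue_measure_modr_affine (c y s : R) (A : set R) :
  0 < c -> s = 1 \/ s = -1 -> measurable A ->
  mu ([set u | A (modr (y + s * u) c)] `&` `[0, c[) = mu (A `&` `[0, c[).
Proof.
move=> c0 [->|->] mA.
  rewrite -(lebesgue_measure_modr_addl y c0 mA); congr (mu (_ `&` _)).
  by apply/seteqP; split => u /=; rewrite mul1r.
rewrite -(lebesgue_measure_modr_subl y c0 mA); congr (mu (_ `&` _)).
by apply/seteqP; split => u /=; rewrite mulN1r.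
Qed.

End lebesgue_translation.

Section independent_event.
Context d (T : measurableType d) (R : realType) (P : probability T R).
Variable F : set T.
Hypothesis mF : measurable F.
Local Open Scope ereal_scope.

Lemma independent_setC (S : set T) : measurable S ->
  P (F `&` S) = P F * P S -> P (F `&` ~` S) = P F * P (~` S).
Proof.
move=> mS FS; rewrite -setDE measureD //; last by rewrite -ge0_fin_numE // fin_num_measure.
transitivity (P F - P F * P S); first by congr (_ - _).
by rewrite probability_setC // muleBr ?mule1 // fin_num_measure.
Qed.

Lemma independent_bigcup (S : (set T)^nat) : (forall n, measurable (S n)) ->
  trivIset setT S -> (forall n, P (F `&` S n) = P F * P (S n)) ->
  P (F `&` \bigcup_n S n) = P F * P (\bigcup_n S n).
Proof.
move=> mS tS FS; rewrite setI_bigcupr !measure_bigcup //; last 2 first.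
- by move=> n _; exact: measurableI.
- exact: trivIset_setIl.
rewrite (eq_eseriesr (fun n _ => FS n)).
by rewrite -[P F]fineK ?fin_num_measure // nneseriesZl.
Qed.

Lemma independent_g_sigma (G : set (set T)) : setI_closed G -> <<s G >> `<=` measurable ->
  (forall H, G H -> P (F `&` H) = P F * P H) ->
  forall H, <<s G >> H -> P (F `&` H) = P F * P H.
Proof.
move=> GI sGm FG; apply: (@dynkin_induction _ (g_sigma_algebraType G) G) => //.
- by rewrite setIT probability_setT mule1.
- by move=> S mS; apply: independent_setC; exact: sGm.
- by move=> S mS tS FS; apply: independent_bigcup => // n; apply: sGm; exact: mS.
Qed.

End independent_event.

Section cylinders.
Context d (T : measurableType d) (R : realType) (I : finType) (X : I -> T -> R).

Definition cylinder (K : {set I}) (B : I -> set R) : set T :=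
  [set w | forall i, i \in K -> B i (X i w)].

Definition cylinders (S : {set I}) : set (set T) :=
  [set H | exists (K : {set I}) (B : I -> set R),
    [/\ K \subset S, (forall i, i \in K -> measurable (B i)) & H = cylinder K B]].

Lemma measurable_cylinder (K : {set I}) (B : I -> set R) :
  (forall i, i \in K -> measurable_fun setT (X i)) ->
  (forall i, i \in K -> measurable (B i)) -> measurable (cylinder K B).
Proof.
move=> mX mB; have -> : cylinder K B = \bigcap_(i in [set i | i \in K]) (X i @^-1` B i).
  by apply/seteqP; split => w /= h i /h.
apply: fin_bigcap_measurable => [|i /= iK]; first exact: finite_finset.
by rewrite -[X in measurable X]setTI; apply: mX => //; exact: mB.
Qed.

Lemma cylinders_setI_closed (S : {set I}) : setI_closed (cylinders S).
Proof.
move=> _ _ [K1 [B1 [K1S mB1 ->]]] [K2 [B2 [K2S mB2 ->]]].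
pose B i := (if i \in K1 then B1 i else setT) `&` (if i \in K2 then B2 i else setT).
exists (K1 :|: K2), B; split.
- by rewrite finset.subUset K1S.
- move=> i _; apply: measurableI.
    by case: ifPn => // /mB1.
  by case: ifPn => // /mB2.
apply/seteqP; split => w /=.
  move=> [h1 h2] i _; rewrite /B.
  by split; case: ifPn => [iK|//]; [exact: h1 | exact: h2].
by move=> h; split => i iK; have := h i;
  rewrite finset.in_setU iK ?orbT /B iK => /(_ isT) /=; tauto.
Qed.

Lemma measurable_fun_cylinders (S : {set I}) (i : I) : i \in S ->
  measurable_fun (setT : set (g_sigma_algebraType (cylinders S))) (X i).
Proof.
move=> iS _ A mA; rewrite setTI; apply: sub_sigma_algebra.
exists [set i]%SET, (fun _ => A); split; rewrite ?finset.sub1set //.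
by apply/seteqP; split => w /=; [move=> h j /finset.set1P -> | apply; rewrite finset.set11].
Qed.

End cylinders.

Section independent_cylinders.
Context d (T : measurableType d) (R : realType) (P : probability T R).
Context (I : finType) (J : {set I}) (X : I -> T -> R).
Hypothesis hX : mutually_independent P J X.

Lemma g_sigma_cylinders_measurable (S : {set I}) : S \subset J ->
  <<s cylinders X S >> `<=` measurable.
Proof.
move=> SJ; apply: smallest_sub; first exact: sigma_algebra_measurable.
move=> _ [K [B [KS mB ->]]]; apply: measurable_cylinder => // i iK.
by apply: hX.1; apply: (fintype.subsetP SJ); exact: (fintype.subsetP KS).
Qed.

Lemma independent_cylinders (S : {set I}) (e : I) (A : set R) :
  S \subset J -> e \in J -> e \notin S -> measurable A ->
  forall H, cylinders X S H -> P (X e @^-1` A `&` H) = (P (X e @^-1` A) * P H)%E.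
Proof.
move=> SJ eJ eS mA _ [K [B [KS mB ->]]].
have eK : e \notin K by apply: contra eS; exact: (fintype.subsetP KS).
have KJ : K \subset J := fintype.subset_trans KS SJ.
pose B' i := if i == e then A else B i.
have mB' i : i \in e |: K -> measurable (B' i).
  by rewrite /B' finset.in_setU1; case: eqP => // _; exact: mB.
have -> : X e @^-1` A `&` cylinder X K B = cylinder X (e |: K) B'.
  apply/seteqP; split => w /=.
    move=> [Aw KBw] i; rewrite finset.in_setU1 /B'.
    by case: eqP => [-> //|_ /= iK]; exact: KBw.
  move=> h; split; first by have := h e; rewrite finset.setU11 /B' eqxx; apply.
  move=> i iK; have := h i; rewrite finset.in_setU1 iK orbT /B'.
  by case: eqP => [ie|_]; [move: iK; rewrite ie (negbTE eK) | apply].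
rewrite (hX.2 _ _ _ mB') ?finset.subUset ?finset.sub1set ?eJ // big_setU1 //= /B' eqxx.
rewrite (hX.2 _ _ KJ mB); congr (_ * _)%E; apply: eq_bigr => i iK.
by case: eqP => // ie; move: iK; rewrite ie (negbTE eK).
Qed.

Lemma independent_g_sigma_cylinders (S : {set I}) (e : I) (A : set R) :
  S \subset J -> e \in J -> e \notin S -> measurable A ->
  forall H, <<s cylinders X S >> H -> P (X e @^-1` A `&` H) = (P (X e @^-1` A) * P H)%E.
Proof.
move=> SJ eJ eS mA; apply: independent_g_sigma.
- by rewrite -[X in measurable X]setTI; exact: hX.1.
- exact: cylinders_setI_closed.
- exact: g_sigma_cylinders_measurable.
- exact: independent_cylinders.
Qed.

End independent_cylinders.

Definition image_measure d d' (T1 : measurableType d) (T2 : measurableType d')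
  (R : realType) (mu : {measure set T1 -> \bar R}) (f : T1 -> T2)
  (mf : measurable_fun setT f) : set T2 -> \bar R := pushforward mu f.

Section image_measure.
Context d d' (T1 : measurableType d) (T2 : measurableType d') (R : realType).
Variables (f : T1 -> T2) (mf : measurable_fun setT f).

HB.instance Definition _ (mu : {measure set T1 -> \bar R}) :=
  Measure.copy (image_measure mu mf)
    (measure_function_pushforward__canonical__measure_function_Measure mu mf).

Lemma image_measure_fin_num_fun (mu : {finite_measure set T1 -> \bar R}) :
  fin_num_fun (image_measure mu mf).
Proof.
move=> A mA; apply: fin_num_measure.
by rewrite -[X in measurable X]setTI; exact: mf.
Qed.

HB.instance Definition _ (mu : {finite_measure set T1 -> \bar R}) :=
  Measure_isFinite.Build _ _ _ (image_measure mu mf) (image_measure_fin_num_fun mu).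

End image_measure.

Section independent_pair.
Context d (T : measurableType d) (R : realType) (P : probability T R).
Variables (U Y : T -> R) (G : set T).
Hypotheses (mU : measurable_fun setT U) (mY : measurable_fun setT Y) (mG : measurable G).
Hypothesis UYG_indep : forall A B, measurable A -> measurable B ->
  P (U @^-1` A `&` (Y @^-1` B `&` G)) = (P (U @^-1` A) * P (Y @^-1` B `&` G))%E.

Lemma independent_const_xsection (D : set (R * R)) (k : \bar R) : measurable D ->
  (forall y, P (U @^-1` xsection D y) = k) ->
  P ([set w | D (Y w, U w)] `&` G) = (k * P G)%E.
Proof.
move=> mD Dk.
(* The law of (Y, U) on G is the product of the laws of Y on G and of U, so Fubini
   integrates the constant section. *)
have mYU : measurable_fun setT (fun w => (Y w, U w)) by exact: measurable_fun_pair.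
pose PYG := image_measure (mrestr P mG) mY.
pose PU := image_measure P mU.
have -> : P ([set w | D (Y w, U w)] `&` G) = image_measure (mrestr P mG) mYU D by [].
rewrite -(@product_measure_unique _ _ R R R PYG PU _ _ D mD); last first.
  move=> B A mB mA; rewrite /= /pushforward /mrestr muleC -UYG_indep //.
  by congr (P _); apply/seteqP; split => w /=; tauto.
rewrite /product_measure1 /=.
under eq_integral do rewrite /= /pushforward Dk.
by rewrite integral_cst //= /pushforward /mrestr preimage_setT setTI.
Qed.

End independent_pair.

Lemma uconnected_crossing_edge m (E : {set 'I_m * 'I_m}) (K : {set 'I_m}) (k i0 : 'I_m) :
  uconnected E -> k \in K -> i0 \notin K ->
  exists l p, [/\ l \in K, p \notin K & ubar E l p].
Proof.
move=> hconn kK i0K.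
case/boolP: [exists l, exists p, [&& l \in K, p \notin K & ubar E l p]].
  by case/existsP => l /existsP[p /and3P[lK pK lp]]; exists l, p.
move=> /existsPn no_edge; suff : (k \in K) = (i0 \in K) by rewrite kK (negbTE i0K).
apply: (closed_connect _ (hconn k i0)) => x y xy.
have yx : ubar E y x by rewrite /ubar orbC.
apply/idP/idP => [xK|yK].
  by move: (no_edge x); rewrite negb_exists => /forallP/(_ y); rewrite xK xy andbT negbK.
by move: (no_edge y); rewrite negb_exists => /forallP/(_ x); rewrite yK yx andbT negbK.
Qed.

Lemma big_setD1_cond (R : pzSemiRingType) (I : finType) (A : {set I}) (F : I -> R)
  (Q : pred I) (a : I) : a \in A ->
  \sum_(i in A | Q i) F i = (Q a)%:R * F a + \sum_(i in A :\ a | Q i) F i.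
Proof.
move=> aA; rewrite !big_mkcondr (big_setD1 a aA) /=.
by case: (Q a); rewrite ?mul1r ?mul0r.
Qed.

Section flow.
Context (R : comPzRingType) (m : nat).
Implicit Types (E : {set 'I_m * 'I_m}) (F : 'I_m * 'I_m -> R).

Definition flow E F (i : 'I_m) : R :=
  \sum_(e in E | e.2 == i) F e - \sum_(e in E | e.1 == i) F e.

Lemma sum_flow E F : \sum_i flow E F i = 0.
Proof.
have sum_by (p : 'I_m * 'I_m -> 'I_m) :
    \sum_i \sum_(e in E | p e == i) F e = \sum_(e in E) F e.
  by rewrite (partition_big p predT).
by rewrite sumrB !sum_by subrr.
Qed.


Lemma flow_setD1 E F e i : e \in E ->
  flow E F i = flow (E :\ e) F i + ((e.2 == i)%:R - (e.1 == i)%:R) * F e.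
Proof. by move=> eE; rewrite /flow !(big_setD1_cond _ _ eE); ring. Qed.

Lemma flow_coef_unit (e : 'I_m * 'I_m) i : (e.1 == i) != (e.2 == i) ->
  let s := (e.2 == i)%:R - (e.1 == i)%:R : R in s = 1 \/ s = -1.
Proof. by case: (e.1 == i) (e.2 == i) => -[] //= _; [right | left]; rewrite ?subr0 ?sub0r. Qed.

End flow.


Lemma modr_sum_tvec (R : realType) d (T : measurableType d) m (E : {set 'I_m * 'I_m})
  (a : R) (r : 'I_m * 'I_m -> T -> R) w :
  modr (\sum_(i < m) tvec E a r i w) (m%:R * a) = 0.
Proof. by rewrite modr_sum_modr (sum_flow E (r ^~ w)) modr0. Qed.

Lemma measurable_fun_sum_cond d (T : measurableType d) (R : realType) (I : finType)
  (Q : pred I) (h : I -> T -> R) : (forall i, Q i -> measurable_fun setT (h i)) ->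
  measurable_fun setT (fun x => \sum_(i | Q i) h i x).
Proof.
move=> mh; rewrite (_ : (fun x => _) = fun x => \sum_i (if Q i then h i x else 0)).
  by apply: measurable_sum => i; case Qi: (Q i); [exact: mh | exact: measurable_cst].
by apply/funext => x; rewrite big_mkcond.
Qed.

Lemma measurable_fun_flow d (T : measurableType d) (R : realType) m
  (E : {set 'I_m * 'I_m}) (r : 'I_m * 'I_m -> T -> R) (i : 'I_m) :
  (forall e, e \in E -> (e.1 == i) || (e.2 == i) -> measurable_fun setT (r e)) ->
  measurable_fun setT (fun w => flow E (r ^~ w) i).
Proof.
move=> mr; apply: measurable_funB; apply: measurable_fun_sum_cond => e /andP[eE /eqP ei];
  by apply: mr; rewrite // ei eqxx ?orbT.
Qed.

Section tvec_distribution.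
Context (R : realType) d (T : measurableType d) (P : probability T R) (m : nat)
  (E : {set 'I_m * 'I_m}) (a : R) (r : 'I_m * 'I_m -> T -> R).
Local Notation c := (m%:R * a).
Hypothesis c_gt0 : 0 < c.
Hypothesis r_indep : mutually_independent P E r.
Hypothesis r_unif : forall e, e \in E -> uniform_on P (r e) 0 c.

(* The shape of the right-hand side of [uniform_on P X 0 c]. *)
Definition uniform_mass (B : set R) : \bar R :=
  (lebesgue_measure (B `&` `[0%R, c%R[) * ((c - 0)^-1)%:E)%E.

Lemma measurable_fun_tvec d' (T' : measurableType d') (r' : 'I_m * 'I_m -> T' -> R) i :
  (forall e, e \in E -> (e.1 == i) || (e.2 == i) -> measurable_fun setT (r' e)) ->
  measurable_fun setT (tvec E a r' i).
Proof.
by move=> mr; apply: (measurableT_comp (measurable_modr c_gt0)); exact: measurable_fun_flow.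
Qed.

Lemma cylinder_tvec_setD1E (l : 'I_m) (e : 'I_m * 'I_m) (K : {set 'I_m}) (B : 'I_m -> set R) :
  e \in E -> l \in K ->
  cylinder (tvec E a r) K B =
  [set w | B l (modr (flow (E :\ e) (r ^~ w) l +
                      ((e.2 == l)%:R - (e.1 == l)%:R) * r e w) c)] `&`
  cylinder (tvec E a r) (K :\ l) B.
Proof.
move=> eE lK; apply/seteqP; split => w /=.
  move=> h; split; first by rewrite -flow_setD1 //; exact: h.
  by move=> i /finset.setD1P[_]; exact: h.
move=> [Bl h] i iK; have [->|il] := eqVneq i l; first by move: Bl; rewrite -flow_setD1.
by apply: h; rewrite finset.in_setD1 il.
Qed.

Lemma cylinder_tvec_setD1 (l : 'I_m) (e : 'I_m * 'I_m) (K : {set 'I_m}) (B : 'I_m -> set R) :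
  e \in E -> l \in K -> (e.1 == l) != (e.2 == l) ->
  (forall i, i \in K :\ l -> (e.1 != i) && (e.2 != i)) ->
  (forall i, i \in K -> measurable (B i)) ->
  P (cylinder (tvec E a r) K B) =
  (uniform_mass (B l) * P (cylinder (tvec E a r) (K :\ l) B))%E.
Proof.
move=> eE lK el eK mB; rewrite (cylinder_tvec_setD1E _ eE lK).
(* Measurability for TS, the sigma-algebra generated by the r f with f <> e, is how
   independence from r e is tracked. *)
set S := E :\ e; pose TS := g_sigma_algebraType (cylinders r S).
have SE : S \subset E := subD1set E e.
have eS : e \notin S by rewrite setD11.
have mrS f : f \in S -> measurable_fun (setT : set TS) (r f).
  exact: measurable_fun_cylinders.
pose Y w := flow S (r ^~ w) l.
have mYS : measurable_fun (setT : set TS) Y.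
  by apply: measurable_fun_flow => f fS _; exact: mrS.
have mY : measurable_fun setT Y.
  by apply: measurable_fun_flow => f fS _; apply: r_indep.1; exact: (fintype.subsetP SE).
pose G := cylinder (tvec E a r) (K :\ l) B.
have GS : <<s cylinders r S >> G.
  apply: (measurable_cylinder (T := TS)) => [i iK|i /finset.setD1P[_ /mB] //].
  apply: measurable_fun_tvec => f fE fi; apply: mrS; rewrite finset.in_setD1 fE andbT.
  by apply: contraTneq fi => ->; rewrite negb_or; exact: eK.
have mG : measurable G := g_sigma_cylinders_measurable r_indep SE GS.
have s_unit := flow_coef_unit R el; set s := _ - _ in s_unit *.
pose D := [set q : R * R | B l (modr (q.1 + s * q.2) c)].
have mD : measurable D.
  rewrite -[X in measurable X]setTI; apply: (measurableT_comp (measurable_modr c_gt0)) => //.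
    by apply: measurable_funD => //; apply: measurable_funM => //; exact: measurable_cst.
  exact: mB.
apply: (independent_const_xsection (r_indep.1 e eE) mY mG _ mD).
  move=> A B' mA mB'; apply: (independent_g_sigma_cylinders r_indep SE eE eS mA).
  apply: (@measurableI _ TS) => //.
  by have := mYS measurableT B' mB'; rewrite setTI.
move=> y; rewrite (r_unif eE).2; last exact: measurable_xsection.
congr (_ * _)%E; rewrite -(lebesgue_measure_modr_affine y c_gt0 s_unit (mB l lK)).
by congr (lebesgue_measure (_ `&` _)); apply/seteqP; split => u; rewrite /xsection /= inE.
Qed.

Lemma cylinder_tvec_prod (i0 : 'I_m) (K : {set 'I_m}) (B : 'I_m -> set R) :
  uconnected E -> i0 \notin K -> (forall i, i \in K -> measurable (B i)) ->
  P (cylinder (tvec E a r) K B) = (\prod_(i in K) uniform_mass (B i))%E.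
Proof.
move=> hconn; have [n] := ubnP #|K|; elim: n K => // n IH K; rewrite ltnS => Kn i0K mB.
have [->|[k kK]] := set_0Vmem K.
  rewrite big_set0 -(probability_setT P); congr (P _).
  by apply/seteqP; split => w // _ i; rewrite finset.in_set0.
have [l [p [lK pK lp]]] := uconnected_crossing_edge hconn kK i0K.
have pl : p != l by apply: contraNneq pK => ->.
pose e := if (l, p) \in E then (l, p) else (p, l).
have eE : e \in E by rewrite /e; case: ifPn => // lpE; move: lp; rewrite /ubar (negbTE lpE).
have el : (e.1 == l) != (e.2 == l) by rewrite /e; case: ifP; rewrite /= eqxx (negbTE pl).
have eK i : i \in K :\ l -> (e.1 != i) && (e.2 != i).
  case/finset.setD1P => il iK; have ip : i != p by apply: contraNneq pK => <-.
  by rewrite /e; case: ifP; rewrite /= ![_ == i]eq_sym il ip.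
rewrite (cylinder_tvec_setD1 eE lK el eK mB) (big_setD1 l lK) IH //.
- by move: Kn; rewrite (cardsD1 l K) lK.
- by rewrite finset.in_setD1 negb_and i0K orbT.
- by move=> i /finset.setD1P[_]; exact: mB.
Qed.

Lemma tvec_uniform (i0 i : 'I_m) : uconnected E -> i != i0 ->
  uniform_on P (tvec E a r i) 0 c.
Proof.
move=> hconn ii0; split.
  by apply: measurable_fun_tvec => e eE _; exact: r_indep.1.
move=> A mA; transitivity (\prod_(j in [set i]%SET) uniform_mass A)%E; last by rewrite big_set1.
rewrite -(cylinder_tvec_prod (i0 := i0)) //; last by rewrite finset.in_set1 eq_sym.
by congr (P _); apply/seteqP; split => w /=; [move=> Aw j /finset.set1P -> | apply; rewrite finset.set11].
Qed.

End tvec_distribution.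

Unset Implicit Arguments.

Theorem lemma1 (R : realType) (d : measure_display) (T : measurableType d)
  (P : probability T R) (m : nat) (E : {set 'I_m * 'I_m}) (a : R)
  (r : 'I_m * 'I_m -> T -> R) :
  0 < a ->
  mutually_independent P E r ->
  (forall e, e \in E -> uniform_on P (r e) 0 (m%:R * a)) ->
  uconnected E ->
  (forall w, modr (\sum_(i < m) tvec E a r i w) (m%:R * a) = 0) /\
  (forall i0 : 'I_m,
     mutually_independent P [set i | i != i0] (tvec E a r) /\
     (forall i, i != i0 -> uniform_on P (tvec E a r i) 0 (m%:R * a))).
Proof.
move=> a_gt0 r_indep r_unif hconn; split=> [w|i0]; first exact: modr_sum_tvec.
have c_gt0 : 0 < m%:R * a by rewrite mulr_gt0 // ltr0n (leq_ltn_trans _ (ltn_ord i0)).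
have t_unif i : i != i0 -> uniform_on P (tvec E a r i) 0 (m%:R * a).
  exact: tvec_uniform c_gt0 r_indep r_unif i0 i hconn.
split=> //; split=> [i _|K B Ki0 mB].
  by apply: measurable_fun_tvec => // e eE _; exact: r_indep.1.
have i0K : i0 \notin K by apply/negP => /(fintype.subsetP Ki0); rewrite inE eqxx.
rewrite (cylinder_tvec_prod c_gt0 r_indep r_unif hconn i0K mB); apply: eq_bigr => i iK.
have iJ : i != i0 by have := fintype.subsetP Ki0 i iK; rewrite inE.
by rewrite (t_unif i iJ).2 //; exact: mB.
Qed.
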